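(* Let $\mathcal F'$ be a finite set of structures in $Rel^{cov}(\Delta,\Delta')$. Suppose there exists a finite set of structures $\mathcal D'$ such that $(\mathcal F',\mathcal D')$ is a finite duality in $Rel^{cov}(\Delta,\Delta')$. Then $\Phi(\mathrm{Forb}(\mathcal F'))=\{\Phi(\mathbf A'):\mathbf A'\in\mathrm{Forb}(\mathcal F')\}$ coincides with $CSP(\Phi(\mathcal D'))=\bigcup_{\mathbf D'\in\mathcal D'}CSP(\Phi(\mathbf D'))$. Explicitly: for every $\mathbf A\in Rel(\Delta)$ there exists $\mathbf A'\in Rel(\Delta,\Delta')$ with $\Phi(\mathbf A')=\mathbf A$ and $\mathbf F'\not\to\mathbf A'$ for every $\mathbf F'\in\mathcal F'$ if and only if $\mathbf A\to\Phi(\mathbf D')$ for some $\mathbf D'\in\mathcal D'$.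
   Context: For a finite relational signature $\Delta$, $Rel(\Delta)$ is the class of finite relational structures of signature $\Delta$ with homomorphisms (maps preserving all relations); $\mathbf A\to\mathbf B$ means there is a homomorphism. For disjoint signatures $\Delta,\Delta'$, $Rel(\Delta,\Delta')=Rel(\Delta\cup\Delta')$, and $\Phi:Rel(\Delta,\Delta')\to Rel(\Delta)$ is the forgetful functor deleting the relations of $\Delta'$ (identity on maps). $Rel^{cov}(\Delta,\Delta')$ is the class of structures in $Rel(\Delta,\Delta')$ where all relations in $\Delta'$ have a common arity $r$ and every $r$-tuple of elements belongs to some relation of $\Delta'$, with homomorphisms as morphisms. For a finite set $\mathcal F'$ in a category $\mathcal C$ of structures, $\mathrm{Forb}(\mathcal F')$ is the class of $\mathbf A'\in\mathcal C$ with $\mathbf F'\not\to\mathbf A'$ for all $\mathbf F'\in\mathcal F'$; for a finite set $\mathcal D'$, $CSP(\mathcal D')$ is the class of $\mathbf A'\in\mathcal C$ with $\mathbf A'\to\mathbf D'$ for some $\mathbf D'\in\mathcal D'$. The pair $(\mathcal F',\mathcal D')$ is a finite duality in $\mathcal C$ if $\mathrm{Forb}(\mathcal F')=CSP(\mathcal D')$ in $\mathcal C$. $\Phi(\mathcal D')=\{\Phi(\mathbf D'):\mathbf D'\in\mathcal D'\}$, and $CSP(\Phi(\mathcal D'))$ is taken in $Rel(\Delta)$. *)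

From mathcomp Require Import all_boot.
Set Implicit Arguments. Unset Strict Implicit. Unset Printing Implicit Defensive.

(* A finite relational signature Delta is a finite index type [I] of relation
   symbols together with an arity function [ar : I -> nat]. *)
Record structure (I : finType) (ar : I -> nat) := Structure {
  carrier : finType;
  rel : forall i : I, {set (ar i).-tuple carrier}
}.

Definition hom (I : finType) (ar : I -> nat) (A B : structure ar) : Prop :=
  exists f : carrier A -> carrier B,
    forall (i : I) (t : (ar i).-tuple (carrier A)),
      t \in rel A i -> map_tuple f t \in rel B i.

(* Structures of Rel(Delta, Delta') where Delta = (I, ar) and Delta' = J is a
   finite set of symbols all of the common arity r. *)
Record structure2 (I : finType) (ar : I -> nat) (J : finType) (r : nat) :=
  Structure2 {
  base : structure ar;
  rel' : forall j : J, {set r.-tuple (carrier base)}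
}.

Definition Phi (I : finType) (ar : I -> nat) (J : finType) (r : nat)
  (A : structure2 ar J r) : structure ar := base A.

Definition hom2 (I : finType) (ar : I -> nat) (J : finType) (r : nat)
  (A B : structure2 ar J r) : Prop :=
  exists f : carrier (base A) -> carrier (base B),
    (forall (i : I) (t : (ar i).-tuple (carrier (base A))),
      t \in rel (base A) i -> map_tuple f t \in rel (base B) i) /\
    (forall (j : J) (t : r.-tuple (carrier (base A))),
      t \in rel' A j -> map_tuple f t \in rel' B j).

Definition covering (I : finType) (ar : I -> nat) (J : finType) (r : nat)
  (A : structure2 ar J r) : Prop :=
  forall t : r.-tuple (carrier (base A)), exists j : J, t \in rel' A j.

(* (F', D') is a finite duality in Rel^cov(Delta, Delta'); the finite sets
   F', D' are given as families indexed by finite types KF, KD. *)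
Definition finite_duality_cov (I : finType) (ar : I -> nat) (J : finType)
  (r : nat) (KF KD : finType) (F : KF -> structure2 ar J r)
  (D : KD -> structure2 ar J r) : Prop :=
  forall A' : structure2 ar J r, covering A' ->
    ((forall k : KF, ~ hom2 (F k) A') <-> exists d : KD, hom2 A' (D d)).

From mathcomp Require Import all_boot.
From Pilot Require Import Defs. (* after all_boot, so that [rel] is the Defs one *)

Set Implicit Arguments.
Unset Strict Implicit.
Unset Printing Implicit Defensive.

(* Forgetting Delta' turns homomorphisms into homomorphisms, so a covering
   A' avoiding F' maps to some D' in D' and then Phi A' -> Phi D'.
   Conversely, given h : A -> Phi D', pull the Delta'-relations of D' back
   along h: the resulting expansion of A is covering because D' is, and h is
   a homomorphism from it to D', so by the duality it avoids every F'. *)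

Section Expansions.

Variables (I : finType) (ar : I -> nat) (J : finType) (r : nat).

Lemma hom2_hom_Phi (A B : structure2 ar J r) : hom2 A B -> hom (Phi A) (Phi B).
Proof. by move=> [f [homf _]]; exists f. Qed.

Definition pullback2 (A : structure ar) (B : structure2 ar J r)
    (f : carrier A -> carrier (base B)) : structure2 ar J r :=
  @Structure2 I ar J r A (fun j => [set t : r.-tuple (carrier A) | map_tuple f t \in rel' B j]).

Variables (A : structure ar) (B : structure2 ar J r).
Variable f : carrier A -> carrier (base B).

Lemma Phi_pullback2 : Phi (pullback2 f) = A.
Proof. by []. Qed.

Lemma covering_pullback2 : covering B -> covering (pullback2 f).
Proof.
move=> covB t; have [j tj] := covB (map_tuple f t).
by exists j; rewrite inE.
Qed.

Lemma hom2_pullback2 :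
    (forall (i : I) (t : (ar i).-tuple (carrier A)),
      t \in rel A i -> map_tuple f t \in rel (base B) i) ->
  hom2 (pullback2 f) B.
Proof. by move=> homf; exists f; split=> // j t; rewrite inE. Qed.

End Expansions.

Lemma hom_Phi_covering_expansion (I : finType) (ar : I -> nat) (J : finType)
    (r : nat) (A : structure ar) (B : structure2 ar J r) :
  covering B -> hom A (Phi B) ->
  exists A' : structure2 ar J r, [/\ Phi A' = A, covering A' & hom2 A' B].
Proof.
move=> covB [f homf]; exists (pullback2 f); split.
- exact: Phi_pullback2.
- exact: covering_pullback2.
- exact: hom2_pullback2.
Qed.

Theorem theorem10 (I : finType) (ar : I -> nat) (J : finType) (r : nat)
  (KF KD : finType) (F : KF -> structure2 ar J r) (D : KD -> structure2 ar J r)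
  (HFcov : forall k : KF, covering (F k))
  (HDcov : forall d : KD, covering (D d))
  (Hdual : finite_duality_cov F D) :
  forall A : structure ar,
    (exists A' : structure2 ar J r,
        Phi A' = A /\ covering A' /\ (forall k : KF, ~ hom2 (F k) A'))
    <-> (exists d : KD, hom A (Phi (D d))).
Proof.
move=> A; split.
- move=> [A' [<- [covA' forbA']]].
  have [d A'D] := (Hdual A' covA').1 forbA'.
  by exists d; exact: hom2_hom_Phi.
- move=> [d AD].
  have [A' [<- covA' A'D]] := hom_Phi_covering_expansion (HDcov d) AD.
  exists A'; split=> //; split=> //.
  by apply: (Hdual A' covA').2; exists d.
Qed.
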